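(* Consider the numerator parameters $\frac{v^{(i)}_r+\sigma}{\ell_r}$ ($r=1,\dots,m$, $\sigma=0,\dots,\ell_r-1$) and denominator parameters $\frac{t}{\ell_0}$ ($t=1,\dots,\ell_0$) of the series $F^{(\mathbf b_i)}_{\mathbf b_i}(\lambda)=\sum_{s\ge0}\frac{\prod_r\prod_\sigma((v^{(i)}_r+\sigma)/\ell_r)_s}{\prod_{t=1}^{\ell_0}(t/\ell_0)_s}\lambda^{s\ell_0}$. (a) If $\mathbf b_i$ is an interior point of $P(A)$, then exactly $\ell_0-R_k$ factors appear in both numerator and denominator, namely $\{(1-s_0^{(j)}/\ell_0)_s:\mathbf b_j\in\mathcal B_k\text{ a boundary point of }P(A)\}$. (b) If $\mathbf b_i$ is a boundary point of $P(A)$, then exactly $\ell_0-R_k-1$ factors appear in both numerator and denominator, namely $\{(1-s_0^{(j)}/\ell_0)_s:\mathbf b_j\in\mathcal B_k\text{ a boundary point of }P(A),\ \mathbf b_j\neq\mathbf b_i\}$.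
   Context: Let $A=\{\mathbf a_1,\dots,\mathbf a_m\}\subseteq\mathbb Z^n$ be linearly independent over $\mathbb R$, $\mathbf a_0\in\mathbb Z^n$, and $\ell_0,\dots,\ell_m$ positive integers with gcd $1$, $\ell_0\mathbf a_0=\sum_{j=1}^m\ell_j\mathbf a_j$, $\ell_0=\sum_{j=1}^m\ell_j$. Let $\mathbb ZA$, $\mathbb ZA_+$ be the groups generated by $A$ and $A\cup\{\mathbf a_0\}$. Let $V$ be the real span of $A$, $V_{\mathbb Z}=V\cap\mathbb Z^n$, $P(A)=\{\sum_jc_j\mathbf a_j:0\le c_j<1\}$, $\mathcal B=V_{\mathbb Z}\cap P(A)$. Each $\mathbf b\in\mathcal B$ is written uniquely $\sum_rv_r\mathbf a_r$ with $v_r\in[0,1)$; $\mathbf b$ is an interior point of $P(A)$ if all $v_r>0$ and a boundary point otherwise. Fix a coset $\mathcal C_k$ of $\mathbb ZA_+$ in $V_{\mathbb Z}$, $\mathcal B_k=\mathcal B\cap\mathcal C_k$ (which has $\ell_0$ elements), and let $R_k$ be the number of interior points of $P(A)$ in $\mathcal B_k$. Fix $\mathbf b_i=\sum_rv^{(i)}_r\mathbf a_r\in\mathcal B_k$. For $\mathbf b_j\in\mathcal B_k$ let $s_0^{(j)}\in\{0,\dots,\ell_0-1\}$ be the unique element with $\mathbf b_i+s_0^{(j)}\mathbf a_0\equiv\mathbf b_j\pmod{\mathbb ZA}$. Pochhammer: $(a)_s=a(a+1)\cdots(a+s-1)$. *)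

From HB Require Import structures.
From mathcomp Require Import all_boot all_order all_algebra.
From mathcomp Require Import boolp reals.
Set Implicit Arguments. Unset Strict Implicit. Unset Printing Implicit Defensive.
Import Order.TTheory GRing.Theory Num.Theory.
Local Open Scope ring_scope.

(* Vectors of Z^n are row vectors 'rV[int]_n; A = {a_1..a_m} is given as the
   rows of an m x n integer matrix. *)

Definition intmx (R : realType) (m n : nat) (M : 'M[int]_(m, n)) : 'M[R]_(m, n) :=
  map_mx (fun z : int => z%:~R) M.

Definition inZA (m n : nat) (A : 'M[int]_(m, n)) (x : 'rV[int]_n) : Prop :=
  exists z : 'rV[int]_m, x = z *m A.

Definition inZAplus (m n : nat) (A : 'M[int]_(m, n)) (a0 : 'rV[int]_n)
    (x : 'rV[int]_n) : Prop :=
  exists (z : 'rV[int]_m) (z0 : int), x = z *m A + z0 *: a0.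

(* b is in B = V_Z ∩ P(A) (b integral, b = sum c_r a_r with 0 <= c_r < 1) *)
Definition in_PA (R : realType) (m n : nat) (A : 'M[int]_(m, n)) (b : 'rV[int]_n) : Prop :=
  exists c : 'rV[R]_m, (forall r, 0 <= c 0 r < 1) /\ c *m intmx R A = intmx R b.

Definition interior_PA (R : realType) (m n : nat) (A : 'M[int]_(m, n)) (b : 'rV[int]_n) : Prop :=
  exists c : 'rV[R]_m, (forall r, 0 < c 0 r < 1) /\ c *m intmx R A = intmx R b.

Definition boundary_PA (R : realType) (m n : nat) (A : 'M[int]_(m, n)) (b : 'rV[int]_n) : Prop :=
  in_PA R A b /\ ~ interior_PA R A b.

Definition s0 (m n : nat) (A : 'M[int]_(m, n)) (a0 : 'rV[int]_n) (l0 : nat)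
    (bi bj : 'rV[int]_n) : nat :=
  find (fun s : nat => `[< inZA A (bj - bi - (s%:Z) *: a0) >]) (iota 0 l0).

Definition num_params (R : realType) (m : nat) (l : 'I_m -> nat) (v : 'rV[R]_m) : seq R :=
  flatten [seq [seq (v 0 r + sg%:R) / (l r)%:R | sg <- iota 0 (l r)] | r <- enum 'I_m].

Definition den_params (R : realType) (l0 : nat) : seq R :=
  [seq t%:R / l0%:R | t <- iota 1 l0].

(* parameters appearing in both numerator and denominator (the denominator
   parameters are pairwise distinct, so this is the multiset intersection) *)
Definition common_params (R : realType) (num den : seq R) : seq R :=
  [seq x <- den | x \in num].

From HB Require Import structures.
From mathcomp Require Import all_boot all_order all_algebra.
From mathcomp Require Import boolp reals.
From mathcomp Require Import zify lra.

Set Implicit Arguments.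
Unset Strict Implicit.
Unset Printing Implicit Defensive.
Import Order.TTheory GRing.Theory Num.Theory.
Local Open Scope ring_scope.

(* Let c(s) = v + (s/l0) (l_1, ..., l_m) be the coordinates of b_i + s a_0 in the
   basis A. Because A is free and gcd(l0, l_1, ..., l_m) = 1, no multiple d a_0 with
   0 < d < l0 lies in ZA, so reducing b_i + s a_0 modulo ZA into P(A), for
   s = 0, ..., l0 - 1, enumerates B_k without repetition, with s_0 = s; the reduction
   has coordinates frac(c(s)) and is a boundary point iff some c_r(s) is an integer.
   On the other side, (v_r + sigma)/l_r = 1 - s/l0 iff c_r(s) = l_r - sigma, so the
   common parameters are the 1 - s/l0 with s <> 0 and c(s) having an integer entry.
   The excluded index s = 0 is b_i itself, a boundary point exactly in case (b). *)

Lemma find_iota_min (P : pred nat) k s :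
  (s < k)%N -> P s -> (find P (iota 0 k) <= s)%N /\ P (find P (iota 0 k)).
Proof.
move=> lt_sk Ps.
have hasP : has P (iota 0 k) by apply/hasP; exists s; rewrite ?mem_iota.
have lt_fk : (find P (iota 0 k) < k)%N by rewrite -{2}(size_iota 0 k) -has_find.
split; last by have := nth_find 0 hasP; rewrite nth_iota.
rewrite leqNgt; apply/negP => lt_sf.
by have := before_find 0 lt_sf; rewrite nth_iota ?Ps // (ltn_trans lt_sf).
Qed.

Lemma perm_iota1_sub k : perm_eq (iota 1 k) [seq (k - s)%N | s <- iota 0 k].
Proof.
apply: uniq_perm; rewrite ?iota_uniq ?map_inj_in_uniq ?iota_uniq //.
  by move=> x y; rewrite !mem_iota; lia.
move=> t; rewrite mem_iota; apply/idP/mapP => [lt_t | [s]].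
  by exists (k - t)%N; rewrite ?mem_iota; lia.
by rewrite mem_iota => lt_s ->; lia.
Qed.

Lemma count_neq0_iota (P : pred nat) k :
  count (fun s => (s != 0%N) && P s) (iota 0 k) = (count P (iota 0 k) - P 0%N)%N.
Proof.
case: k => [|k] //=; rewrite add0n addKn; apply: eq_in_count => s.
by rewrite mem_iota; case: s.
Qed.

Lemma row_free_intmx_inj (R : realType) p q (M : 'M[int]_(p, q)) :
  row_free (intmx R M) -> injective (fun z : 'rV[int]_p => z *m M).
Proof.
move=> freeM z1 z2 /(congr1 (@intmx R _ _)); rewrite /intmx !map_mxM.
move/(row_free_inj freeM)/matrixP => e; apply/matrixP => i j.
by have := e i j; rewrite !mxE => /intr_inj.
Qed.

Section Coset.
Variables (R : realType) (n m : nat) (A : 'M[int]_(m, n)) (a0 : 'rV[int]_n)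
  (l : 'I_m -> nat) (l0 : nat).
Hypothesis freeA : row_free (intmx R A).
Hypothesis l_gt0 : forall j, (0 < l j)%N.
Hypothesis l0_gt0 : (0 < l0)%N.
Hypothesis coprime_l : gcdn l0 (\big[gcdn/0%N]_(j < m) l j) = 1%N.
Hypothesis a0_rel : (l0%:Z) *: a0 = \sum_(j < m) ((l j)%:Z) *: row j A.
Variables (bi : 'rV[int]_n) (v : 'rV[R]_m).
Hypothesis v_box : forall r, 0 <= v 0 r < 1.
Hypothesis v_coord : v *m intmx R A = intmx R bi.

Local Notation AR := (intmx R A).
Local Notation s0 := (s0 A a0 l0 bi).

Definition lrow : 'rV[int]_m := \row_j (l j)%:Z.

Lemma l0a0E : l0%:Z *: a0 = lrow *m A.
Proof. by rewrite a0_rel mulmx_sum_row; apply: eq_bigr => j _; rewrite mxE. Qed.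

Lemma l0R_neq0 : (l0%:R : R) != 0.
Proof. by rewrite pnatr_eq0 -lt0n. Qed.

Definition coord (s : nat) : 'rV[R]_m := v + (s%:R / l0%:R) *: intmx R lrow.

Lemma coord_mul s : coord s *m AR = intmx R (bi + s%:Z *: a0).
Proof.
rewrite /coord mulmxDl v_coord /intmx map_mxD -scalemxAl -map_mxM -l0a0E.
by rewrite !map_mxZ scalerA mulfVK ?l0R_neq0.
Qed.

Lemma l0_dvd_inZA d : inZA A (d%:Z *: a0) -> (l0 %| d)%N.
Proof.
case=> z dz.
have lz : d%:Z *: lrow = l0%:Z *: z.
  apply: (row_free_intmx_inj freeA) => /=.
  by rewrite -!scalemxAl -l0a0E -dz !scalerA mulrC.
have dvd_l j : (l0 %| d * l j)%N.
  have := congr1 (fun M : 'rV[int]_m => `|M ord0 j|%N) lz; rewrite /= !mxE !abszM /= => ->.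
  exact: dvdn_mulr.
have : (l0 %| d * \big[gcdn/0%N]_(j < m) l j)%N.
  rewrite (big_morph (muln d) (muln_gcdr d) (muln0 d)).
  by apply/dvdn_biggcdP => i _; exact: dvd_l.
by rewrite Gauss_dvdl // /coprime coprime_l.
Qed.

Lemma s0_eq b s : (s < l0)%N -> inZA A (b - bi - s%:Z *: a0) -> s0 b = s.
Proof.
move=> lt_s [z bz].
have [le_s0 [z' bz']] : (s0 b <= s)%N /\ inZA A (b - bi - (s0 b)%:Z *: a0).
  by have [? /asboolP] := find_iota_min
    (P := fun s => `[< inZA A (b - bi - s%:Z *: a0) >]) lt_s (asboolT (ex_intro _ z bz)).
have dvd_l0 : (l0 %| s - s0 b)%N.
  apply: l0_dvd_inZA; exists (z' - z).
  by rewrite mulmxBl -bz -bz' -subzn // scalerBl opprB [RHS]addrC addrA subrK.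
have [|pos] := posnP (s - s0 b); first lia.
by have := dvdn_leq pos dvd_l0; lia.
Qed.

Definition in_Bk b : Prop := in_PA R A b /\ inZAplus A a0 (b - bi).

Lemma in_Bk_s0 b : in_Bk b -> (s0 b < l0)%N /\ inZA A (b - bi - (s0 b)%:Z *: a0).
Proof.
case=> _ [z [k bk]].
have l0Z_gt0 : 0 < l0%:Z by rewrite ltz_nat.
set s := `|(k %% l0%:Z)%Z|%N.
have sE : s%:Z = (k %% l0%:Z)%Z by rewrite gez0_abs // modz_ge0 // gt_eqF.
have lt_s : (s < l0)%N by rewrite -ltz_nat sE ltz_pmod.
suff inZA_s : inZA A (b - bi - s%:Z *: a0) by rewrite (s0_eq lt_s inZA_s).
exists (z + (k %/ l0%:Z)%Z *: lrow).
rewrite bk mulmxDl -scalemxAl -l0a0E scalerA sE {1}(divz_eq k l0%:Z) scalerDl.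
by rewrite addrA addrK.
Qed.

Definition floor_coord s : 'rV[int]_m := \row_r Num.floor (coord s 0 r).
Definition frac_coord s : 'rV[R]_m := coord s - intmx R (floor_coord s).
(* The reduction of [bi + s a0] modulo ZA into P(A). *)
Definition point s : 'rV[int]_n := bi + (s%:Z *: a0 - floor_coord s *m A).

Lemma frac_coord_mul s : frac_coord s *m AR = intmx R (point s).
Proof. by rewrite /point addrA mulmxBl coord_mul /intmx map_mxB map_mxM. Qed.

Lemma frac_coord_box s r : 0 <= frac_coord s 0 r < 1.
Proof.
rewrite !mxE; set x := v 0 r + _; have /andP[] := floor_itv x.
by rewrite intrD => ge_floor lt_floor; apply/andP; split; lra.
Qed.

Lemma frac_coord_eq0 s r : (frac_coord s 0 r == 0) = (coord s 0 r \is a Num.int).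
Proof. by rewrite !mxE subr_eq0 intrEfloor eq_sym. Qed.

Lemma in_Bk_point s : in_Bk (point s).
Proof.
split; first by exists (frac_coord s); split; [exact: frac_coord_box | exact: frac_coord_mul].
by exists (- floor_coord s), s%:Z; rewrite /point mulNmx [bi + _]addrC addrK addrC.
Qed.

Lemma s0_point s : (s < l0)%N -> s0 (point s) = s.
Proof.
move=> lt_s; apply: s0_eq lt_s _; exists (- floor_coord s).
by rewrite /point mulNmx [bi + _]addrC addrK addrC addKr.
Qed.

Lemma pointE b : in_Bk b -> point (s0 b) = b.
Proof.
move=> Bb; have [_ [z bz]] := in_Bk_s0 Bb; case: Bb => [[c [c_box c_mul]] _].
have bE : b = bi + ((s0 b)%:Z *: a0 + z *m A).
  by rewrite -bz [(s0 b)%:Z *: a0 + _]addrC subrK addrC subrK.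
have cE : c = coord (s0 b) + intmx R z.
  apply: (row_free_inj freeA); rewrite /= c_mul mulmxDl coord_mul {1}bE addrA.
  by rewrite /intmx map_mxD map_mxM.
have floorE : floor_coord (s0 b) = - z.
  apply/matrixP => i r; rewrite ord1 !mxE; apply: floor_def.
  have := c_box r; rewrite cE !mxE intrD intrN; lra.
by rewrite /point floorE mulNmx opprK -bE.
Qed.

Definition has_int_coord s : bool := [exists r, coord s 0 r \is a Num.int].

Lemma interior_point s : interior_PA R A (point s) <-> ~~ has_int_coord s.
Proof.
split.
- case=> c [c_box c_mul].
  have cE : c = frac_coord s by apply: (row_free_inj freeA); rewrite /= c_mul frac_coord_mul.
  apply/existsPn => r; rewrite -frac_coord_eq0 -cE.
  by have /andP[/gt_eqF -> _] := c_box r.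
- move/existsPn => no_int; exists (frac_coord s); split; last exact: frac_coord_mul.
  move=> r; have /andP[ge0 ->] := frac_coord_box s r.
  by rewrite lt_def ge0 frac_coord_eq0 no_int.
Qed.

Lemma boundary_point s : boundary_PA R A (point s) <-> has_int_coord s.
Proof.
rewrite /boundary_PA interior_point; split => [[_ /negP] | wall]; first by case: (has_int_coord s).
by split; [case: (in_Bk_point s) | apply/negP; rewrite negbK].
Qed.

Lemma coord0 : coord 0 = v.
Proof. by rewrite /coord mul0r scale0r addr0. Qed.

Lemma coord_entry s r : coord s 0 r = v 0 r + s%:R / l0%:R * (l r)%:R.
Proof. by rewrite !mxE. Qed.

Lemma num_param_eq r sg s : (sg <= l r)%N ->
  ((v 0 r + sg%:R) / (l r)%:R == 1 - s%:R / l0%:R) = (coord s 0 r == (l r - sg)%:R).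
Proof.
move=> le_sg; have l_neq0 : ((l r)%:R : R) != 0 by rewrite pnatr_eq0 -lt0n.
rewrite coord_entry natrB // -(inj_eq (mulIf l_neq0)) mulfVK //.
by apply/eqP/eqP => e; lra.
Qed.

Lemma num_paramsP s : (s < l0)%N ->
  (1 - s%:R / l0%:R \in num_params l v) = (s != 0%N) && has_int_coord s.
Proof.
move=> lt_s; apply/idP/andP.
- case/flattenP => _ /mapP[r _ ->] /mapP[sg]; rewrite mem_iota => /andP[_ lt_sg].
  move/esym/eqP; rewrite num_param_eq ?(ltnW lt_sg) // => /eqP coordE.
  split; last by apply/existsP; exists r; rewrite coordE natr_int.
  apply/eqP => s_eq0; move: coordE; rewrite s_eq0 coord0 => vE.
  by have /andP[_] := v_box r; rewrite vE -[1]/(1%:R) ltr_nat; lia.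
- case=> s_neq0 /existsP[r].
  have /andP[v_ge0 v_lt1] := v_box r.
  have s_pos : (0 : R) < s%:R / l0%:R * (l r)%:R.
    by rewrite !mulr_gt0 ?invr_gt0 ?ltr0n // lt0n.
  have s_lt : s%:R / l0%:R * (l r)%:R < (l r)%:R :> R.
    by rewrite gtr_pMl ?ltr0n // ltr_pdivrMr ?ltr0n // mul1r ltr_nat.
  rewrite intrEge0 ?coord_entry; last lra.
  case/natrP => k coordE.
  have k_gt0 : (0 < k)%N by rewrite -(ltr_nat R); lra.
  have k_le : (k <= l r)%N by rewrite -ltnS -(ltr_nat R) -natr1; lra.
  apply/flattenP; exists [seq (v 0 r + sg%:R) / (l r)%:R | sg <- iota 0 (l r)].
    by apply/mapP; exists r; rewrite ?mem_enum.
  apply/mapP; exists (l r - k)%N; first by rewrite mem_iota; lia.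
  by apply/esym/eqP; rewrite num_param_eq ?leq_subr // subKn // coord_entry coordE.
Qed.

Lemma perm_common :
  perm_eq (common_params (num_params l v) (den_params R l0))
          [seq 1 - s%:R / l0%:R | s <- iota 0 l0 & (s != 0%N) && has_int_coord s].
Proof.
apply: perm_trans (perm_filter _ (perm_map _ (perm_iota1_sub l0))) _; rewrite -map_comp.
have -> : [seq (l0 - s)%:R / l0%:R | s <- iota 0 l0] =
          [seq 1 - s%:R / l0%:R :> R | s <- iota 0 l0].
  apply/eq_in_map => s; rewrite mem_iota => /andP[_ lt_s].
  by rewrite natrB ?(ltnW lt_s) // mulrBl divff ?l0R_neq0.
rewrite filter_map; apply/perm_map.
rewrite (@eq_in_filter _ _ (fun s => (s != 0%N) && has_int_coord s)) //.
by move=> s; rewrite mem_iota => /andP[_ lt_s]; exact: num_paramsP.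
Qed.

Lemma has_int_coord0 : has_int_coord 0 <-> ~ (forall r, 0 < v 0 r).
Proof.
rewrite /has_int_coord coord0 -existsNP; split => [/existsP[r] | [r v_le0]].
- have /andP[v_ge0 v_lt1] := v_box r.
  rewrite intrEge0 // => /natrP[k vE]; exists r; move: v_lt1.
  by rewrite vE -[1]/(1%:R) ltr_nat ltr0n; lia.
- apply/existsP; exists r; have /andP[v_ge0 _] := v_box r.
  suff -> : v 0 r = 0 by exact: int_num0.
  by apply/eqP; rewrite eq_le v_ge0 andbT leNgt; exact/negP.
Qed.

Lemma in_Bk_bi : in_Bk bi.
Proof.
split; first by exists v.
by exists 0, 0; rewrite subrr mul0mx scale0r addr0.
Qed.

Lemma s0_eq0 b : in_Bk b -> (s0 b == 0%N) = (b == bi).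
Proof.
have s0_bi : s0 bi = 0%N.
  by apply: s0_eq l0_gt0 _; exists 0; rewrite subrr scale0r subr0 mul0mx.
move=> Bb; apply/eqP/eqP => [s0_b | ->]; last exact: s0_bi.
by rewrite -(pointE Bb) s0_b -[in RHS](pointE in_Bk_bi) s0_bi.
Qed.

Variable Bk : seq 'rV[int]_n.
Hypothesis Bk_uniq : uniq Bk.
Hypothesis mem_Bk : forall b, b \in Bk <-> in_Bk b.

Lemma perm_Bk_point : perm_eq Bk [seq point s | s <- iota 0 l0].
Proof.
apply: uniq_perm => //.
  rewrite map_inj_in_uniq ?iota_uniq // => s1 s2.
  rewrite !mem_iota => /andP[_ lt1] /andP[_ lt2] e.
  by rewrite -(s0_point lt1) e s0_point.
move=> b; apply/idP/mapP => [/mem_Bk Bb | [s _ ->]]; last exact/mem_Bk/in_Bk_point.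
have [lt_s _] := in_Bk_s0 Bb.
by exists (s0 b); rewrite ?mem_iota ?pointE.
Qed.

Lemma count_interior :
  count (fun b => `[< interior_PA R A b >]) Bk = count (predC has_int_coord) (iota 0 l0).
Proof.
rewrite (permP perm_Bk_point) count_map; apply: eq_count => s /=.
by rewrite (propext (interior_point s)) asboolb.
Qed.

Lemma mem_boundary_params (P : pred 'rV[int]_n) (Q : pred nat) :
  {in Bk, forall b, P b = Q (s0 b)} ->
  [seq 1 - (s0 b)%:R / l0%:R | b <- [seq b <- Bk | `[< boundary_PA R A b >]] & P b]
  =i [seq 1 - s%:R / l0%:R :> R | s <- iota 0 l0 & Q s && has_int_coord s].
Proof.
move=> PQ; apply/perm_mem; rewrite -filter_predI.
apply: perm_trans (perm_map _ (perm_filter _ perm_Bk_point)) _.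
rewrite filter_map -map_comp.
rewrite (@eq_in_filter _ _ (fun s => Q s && has_int_coord s)) => [|s]; last first.
  rewrite mem_iota => /andP[_ lt_s] /=.
  rewrite PQ ?s0_point ?(propext (boundary_point s)) ?asboolb //.
  exact/mem_Bk/in_Bk_point.
rewrite ((eq_in_map _ (fun s => 1 - s%:R / l0%:R) _).1) // => s.
by rewrite mem_filter mem_iota => /andP[_ /andP[_ lt_s]] /=; rewrite s0_point.
Qed.

Lemma size_common :
  size (common_params (num_params l v) (den_params R l0)) =
  (l0 - count (fun b => `[< interior_PA R A b >]) Bk - has_int_coord 0)%N.
Proof.
rewrite (perm_size perm_common) size_map size_filter count_neq0_iota count_interior.
by have := count_predC has_int_coord (iota 0 l0); rewrite size_iota; lia.
Qed.

Lemma interior_case : (forall r, 0 < v 0 r) ->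
  size (common_params (num_params l v) (den_params R l0)) =
    (l0 - count (fun b => `[< interior_PA R A b >]) Bk)%N /\
  common_params (num_params l v) (den_params R l0) =i
    [seq 1 - (s0 b)%:R / l0%:R | b <- [seq b <- Bk | `[< boundary_PA R A b >]]].
Proof.
move=> v_gt0; have int0 : has_int_coord 0 = false by apply/negbTE/negP => /has_int_coord0.
split; first by rewrite size_common int0 subn0.
move=> x; rewrite (perm_mem perm_common) -(filter_predT (filter _ Bk)).
rewrite (@mem_boundary_params predT predT) //; congr (x \in map _ _).
by apply: eq_in_filter => -[|s] _ //=; rewrite int0.
Qed.

Lemma boundary_case : ~ (forall r, 0 < v 0 r) ->
  size (common_params (num_params l v) (den_params R l0)) =
    (l0 - count (fun b => `[< interior_PA R A b >]) Bk - 1)%N /\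
  common_params (num_params l v) (den_params R l0) =i
    [seq 1 - (s0 b)%:R / l0%:R | b <- [seq b <- Bk | `[< boundary_PA R A b >]] & b != bi].
Proof.
move=> /has_int_coord0 int0; split; first by rewrite size_common int0.
move=> x; rewrite (perm_mem perm_common).
rewrite (@mem_boundary_params (fun b => b != bi) (fun s => s != 0%N)) // => b /mem_Bk Bb.
by rewrite s0_eq0.
Qed.
End Coset.

Theorem proposition6p14 (R : realType) (n m : nat) (A : 'M[int]_(m, n))
  (a0 : 'rV[int]_n) (l : 'I_m -> nat) (l0 : nat)
  (hA : row_free (intmx R A))
  (hl : forall j, (0 < l j)%N) (hl0 : (0 < l0)%N)
  (hgcd : gcdn l0 (\big[gcdn/0%N]_(j < m) l j) = 1%N)
  (hrel : (l0%:Z) *: a0 = \sum_(j < m) ((l j)%:Z) *: row j A)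
  (hsum : l0 = (\sum_(j < m) l j)%N)
  (bi : 'rV[int]_n) (v : 'rV[R]_m)
  (hv : (forall r, 0 <= v 0 r < 1) /\ v *m intmx R A = intmx R bi)
  (Bk : seq 'rV[int]_n) (hBk : uniq Bk)
  (hBkP : forall b, b \in Bk <-> (in_PA R A b /\ inZAplus A a0 (b - bi))) :
  let Rk := count (fun b => `[< interior_PA R A b >]) Bk in
  let common := common_params (num_params l v) (den_params R l0) in
  let bnd := [seq b <- Bk | `[< boundary_PA R A b >]] in
  ((forall r, 0 < v 0 r) ->
     size common = (l0 - Rk)%N /\
     common =i [seq 1 - (s0 A a0 l0 bi b)%:R / l0%:R | b <- bnd]) /\
  (~ (forall r, 0 < v 0 r) ->
     size common = (l0 - Rk - 1)%N /\
     common =i [seq 1 - (s0 A a0 l0 bi b)%:R / l0%:R | b <- bnd & b != bi]).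
Proof.
(* [hsum] only matters for the hypergeometric series itself, not for matching its parameters. *)
have [v_box v_coord] := hv.
by split; [exact: interior_case | exact: boundary_case].
Qed.
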